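(* Let $K$ be a class of partial functions from $\mathbb{N}^k$ to $\mathbb{N}$ (of various arities $k\ge1$) satisfying: (1) $K$ contains all partial recursive functions and is closed under substitution, primitive recursion and the $\mu$-operator; (2) for every unary function $f\in K$ there exist a set $M\subseteq\mathbb{N}$ and unary functions $\alpha,\omega\in K$ whose domains contain $M$, such that the indicator function of $M$ belongs to $K$, and for all $x,y$, $f(x)$ is defined and equals $y$ iff there is $m\in M$ with $\alpha(m)=x$ and $\omega(m)=y$; (3) there exists a binary function $F\in K$ such that for every unary $f\in K$ there is $n$ with $F(n,\cdot)=f$. Let $F$ be such a binary universal function. Then an arbitrary partial function $f$ (of any arity) belongs to $K$ if and only if $f$ is partial recursive relative to $F$.
   Context: Fix a standard recursive bijective encoding of tuples of natural numbers by natural numbers. The graph of a partial function $g:\mathbb{N}^k\to\mathbb{N}$ is the set of codes of tuples $(x_1,\dots,x_k,y)$ with $g(x_1,\dots,x_k)$ defined and equal to $y$. For sets $X,Y\subseteq\mathbb{N}$, $X$ is enumeration reducible to $Y$ if there is a recursively enumerable set $W$ of pairs $(x,u)$ such that $x\in X$ iff there exists $u$ with $(x,u)\in W$ and $D_u\subseteq Y$, where $D_u$ is the finite set with canonical index $u$. A partial function $f$ is partial recursive relative to a partial function $F$ if the graph of $f$ is enumeration reducible to the graph of $F$. *)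

From mathcomp Require Import all_boot.
Set Implicit Arguments. Unset Strict Implicit. Unset Printing Implicit Defensive.

Definition pfun (k : nat) := k.-tuple nat -> option nat.

Definition zero_fn (k : nat) : pfun k := fun _ => Some 0.
Definition succ_fn : pfun 1 := fun x => Some (thead x).+1.
Definition proj_fn (k : nat) (i : 'I_k) : pfun k := fun x => Some (tnth x i).

Definition subst_fn (m k : nat) (h : pfun m) (gs : 'I_m -> pfun k) : pfun k :=
  fun x => if [forall i, gs i x != None]
           then h [tuple odflt 0 (gs i x) | i < m] else None.

(* Primitive recursion (recursion variable first):
   f(0, x) = g(x),  f(n+1, x) = h(n, f(n,x), x). *)
Fixpoint prec_aux (k : nat) (g : pfun k) (h : pfun k.+2) (x : k.-tuple nat)
  (n : nat) : option nat :=
  match n with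
  | 0 => g x
  | n'.+1 => match prec_aux g h x n' with
             | Some v => h (cons_tuple n' (cons_tuple v x))
             | None => None
             end
  end.
Definition prec_fn (k : nat) (g : pfun k) (h : pfun k.+2) : pfun k.+1 :=
  fun t => prec_aux g h (behead_tuple t) (thead t).

(* f is obtained from g by the mu-operator (search variable first):
   f(x) = least y with g(y,x) = 0 and g(z,x) defined (and nonzero) for z < y. *)
Definition is_mu (k : nat) (g : pfun k.+1) (f : pfun k) : Prop :=
  forall x y, f x = Some y <->
    (g (cons_tuple y x) = Some 0 /\
     forall z, z < y -> exists v, g (cons_tuple z x) = Some v.+1).

Inductive PR : forall k, pfun k -> Prop :=
| PR_zero k : PR (@zero_fn k)
| PR_succ : PR succ_fn
| PR_proj k (i : 'I_k) : PR (proj_fn i)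
| PR_subst m k (h : pfun m) (gs : 'I_m -> pfun k) :
    PR h -> (forall i, PR (gs i)) -> PR (subst_fn h gs)
| PR_prec k (g : pfun k) (h : pfun k.+2) : PR g -> PR h -> PR (prec_fn g h)
| PR_mu k (g : pfun k.+1) (f : pfun k) : PR g -> is_mu g f -> PR f.

Definition cpair (x y : nat) : nat := (x + y) * (x + y).+1 %/ 2 + y.
Fixpoint code_seq (s : seq nat) : nat :=
  match s with
  | [::] => 0
  | [:: x] => x
  | x :: s' => cpair x (code_seq s')
  end.

Definition graph (k : nat) (g : pfun k) (z : nat) : Prop :=
  exists (x : k.-tuple nat) (y : nat), g x = Some y /\ z = code_seq (rcons x y).

(* canonical index of finite sets: D_u = { i | bit i of u is 1 } *)
Definition Dfin (u i : nat) : bool := odd (u %/ 2 ^ i).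

Definition re_set (W : nat -> Prop) : Prop :=
  exists g : pfun 1, PR g /\ forall z, W z <-> g [tuple z] <> None.

Definition enum_reducible (X Y : nat -> Prop) : Prop :=
  exists W : nat -> Prop, re_set W /\
    forall x, X x <-> exists u, W (cpair x u) /\ forall i, Dfin u i -> Y i.

Definition rel_rec (k l : nat) (f : pfun k) (F : pfun l) : Prop :=
  enum_reducible (graph f) (graph F).

Definition class := forall k, pfun k -> Prop.

Definition hyp1 (K : class) : Prop :=
  (forall k (f : pfun k), PR f -> K k f) /\
  (forall m k (h : pfun m) (gs : 'I_m -> pfun k),
      K m h -> (forall i, K k (gs i)) -> K k (subst_fn h gs)) /\
  (forall k (g : pfun k) (h : pfun k.+2), K k g -> K k.+2 h -> K k.+1 (prec_fn g h)) /\
  (forall k (g : pfun k.+1) (f : pfun k), K k.+1 g -> is_mu g f -> K k f).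

Definition indicator (M : nat -> Prop) (c : pfun 1) : Prop :=
  forall x, (M x -> c [tuple x] = Some 1) /\ (~ M x -> c [tuple x] = Some 0).

Definition hyp2 (K : class) : Prop :=
  forall f : pfun 1, K 1 f ->
    exists (M : nat -> Prop) (alpha omega chi : pfun 1),
      K 1 alpha /\ K 1 omega /\
      (forall m, M m -> alpha [tuple m] <> None /\ omega [tuple m] <> None) /\
      K 1 chi /\ indicator M chi /\
      forall x y, f [tuple x] = Some y <->
        exists m, M m /\ alpha [tuple m] = Some x /\ omega [tuple m] = Some y.

Definition universal (K : class) (F : pfun 2) : Prop :=
  forall f : pfun 1, K 1 f -> exists n, forall x, F [tuple n; x] = f [tuple x].

Definition hyp3 (K : class) : Prop :=
  exists F : pfun 2, K 2 F /\ universal K F.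

(* If f is in K, so is its unary coded version, which is F(n, -) for some n;
   then z |-> <n, z, value(z)> is a primitive recursive many-one reduction of
   the graph of f to that of F, a special case of enumeration reducibility.
   Conversely, condition (2) makes the graph of every member of K, and the
   domain of every partial recursive function, the projection of a relation
   decidable in K.  Such projections are closed under enumeration
   reducibility: the finitely many elements of a canonical finite set D_u
   need only finitely many witnesses, so one number bounds them all.  Hence
   the graph of f is such a projection, and f is obtained in K by an
   unbounded search for a witness. *)

From Stdlib Require Import Classical FunctionalExtensionality ClassicalDescription.
From mathcomp Require Import all_boot zify.
Set Implicit Arguments. Unset Strict Implicit. Unset Printing Implicit Defensive.

(** * Unbounded search, pairing and codes *)

Definition least (P : nat -> bool) : option nat :=
  match excluded_middle_informative (exists n, P n) with
  | left exP => Some (ex_minn exP)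
  | right _ => None
  end.

Lemma leastP (P : nat -> bool) y :
  least P = Some y <-> P y /\ forall z, z < y -> ~~ P z.
Proof.
rewrite /least; case: excluded_middle_informative => [exP|noP].
- case: ex_minnP => m Pm m_min; split.
  + by case=> <-; split=> // z ltzm; apply/negP => /m_min; lia.
  + case=> Py y_min; congr Some; apply/eqP; rewrite eqn_leq m_min //=.
    by rewrite leqNgt; apply/negP => /y_min; rewrite Pm.
- by split=> // -[Py _]; case: noP; exists y.
Qed.

Lemma least_None (P : nat -> bool) : least P = None <-> ~ exists n, P n.
Proof. by rewrite /least; case: excluded_middle_informative => [exP|noP]; split=> // /(_ exP). Qed.

Lemma least_witness (P : nat -> bool) y : P y -> exists w, least P = Some w /\ P w.
Proof.
move=> Py; case E: (least P) => [w|]; first by move/leastP: E => [Pw _]; exists w.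
by move/least_None: E; case; exists y.
Qed.

Definition tri n := n * n.+1 %/ 2.

Lemma triS n : tri n.+1 = tri n + n.+1.
Proof. rewrite /tri; nia. Qed.

Lemma leq_tri m n : m <= n -> tri m <= tri n.
Proof. by move=> le_mn; rewrite /tri leq_div2r // leq_mul. Qed.

Lemma cpairE a b : cpair a b = tri (a + b) + b.
Proof. by []. Qed.

Definition diag z := odflt 0 (least (fun s => z < tri s.+1)).

Lemma diag_bounds z : tri (diag z) <= z < tri (diag z).+1.
Proof.
have /(least_witness (P := fun s => z < tri s.+1)) [w [E lt_z]] : z < tri z.+1.
  by rewrite triS; lia.
rewrite /diag E /= lt_z andbT; case: w E {lt_z} => [//|w].
by move/leastP=> [_ /(_ w (ltnSn w))]; rewrite -leqNgt.
Qed.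

Lemma diag_cpair a b : diag (cpair a b) = a + b.
Proof.
rewrite /diag (_ : least _ = Some (a + b)) //; apply/leastP; split.
- by rewrite cpairE triS; lia.
- by move=> z lt_z; rewrite -leqNgt cpairE; have := leq_tri lt_z; lia.
Qed.

Definition csnd z := z - tri (diag z).
Definition cfst z := diag z - csnd z.

Lemma csnd_cpair a b : csnd (cpair a b) = b.
Proof. by rewrite /csnd diag_cpair cpairE; lia. Qed.

Lemma cfst_cpair a b : cfst (cpair a b) = a.
Proof. by rewrite /cfst csnd_cpair diag_cpair; lia. Qed.

Lemma cpair_unpair z : cpair (cfst z) (csnd z) = z.
Proof.
have := diag_bounds z; rewrite triS cpairE /cfst /csnd => bounds.
have -> : diag z - (z - tri (diag z)) + (z - tri (diag z)) = diag z by lia.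
lia.
Qed.

Lemma Dfin_exp2 c i : Dfin (2 ^ c) i = (i == c).
Proof.
rewrite /Dfin; case: (ltngtP i c) => ic.
- rewrite -expnB //; last exact: ltnW.
  by rewrite oddX orbF subn_eq0 leqNgt ic.
- by rewrite divn_small // ltn_exp2l.
- by rewrite ic divnn expn_gt0.
Qed.

Lemma Dfin_lt u i : Dfin u i -> i < u.
Proof.
rewrite /Dfin => odd_q; have : 0 < u %/ 2 ^ i by case: (u %/ 2 ^ i) odd_q.
by rewrite divn_gt0 ?expn_gt0 //; apply: leq_trans (ltn_expl i (isT : 1 < 2)).
Qed.

Lemma behead_cons_tuple k a (x : k.-tuple nat) : behead_tuple (cons_tuple a x) = x.
Proof. exact: val_inj. Qed.

Lemma code_rcons x y : code_seq (rcons x y) = foldr cpair y x.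
Proof. by elim: x => [//|a x /= <-]; case: x. Qed.

Fixpoint dec_args k z : seq nat :=
  if k is k'.+1 then cfst z :: dec_args k' (csnd z) else [::].
Fixpoint dec_val k z : nat := if k is k'.+1 then dec_val k' (csnd z) else z.

Lemma size_dec_args k z : size (dec_args k z) == k.
Proof. by elim: k z => //= k IH z; rewrite eqSS IH. Qed.

Definition dec_tuple k z : k.-tuple nat := Tuple (size_dec_args k z).

Lemma dec_code x y :
  dec_args (size x) (code_seq (rcons x y)) = x /\ dec_val (size x) (code_seq (rcons x y)) = y.
Proof.
rewrite code_rcons; elim: x => [//|a x [IHargs IHval]] /=.
by rewrite cfst_cpair csnd_cpair IHargs IHval.
Qed.

Lemma code_dec k z : code_seq (rcons (dec_args k z) (dec_val k z)) = z.
Proof. by rewrite code_rcons; elim: k z => [//|k IH] z /=; rewrite IH cpair_unpair. Qed.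

Lemma dec_tuple_code k (x : k.-tuple nat) y : dec_tuple k (code_seq (rcons x y)) = x.
Proof. by apply: val_inj; have [] := dec_code x y; rewrite size_tuple. Qed.

Lemma dec_val_code k (x : k.-tuple nat) y : dec_val k (code_seq (rcons x y)) = y.
Proof. by have [] := dec_code x y; rewrite size_tuple. Qed.

Lemma graphE k (f : pfun k) z : graph f z <-> f (dec_tuple k z) = Some (dec_val k z).
Proof.
split=> [[x [y [fxy ->]]] | fz]; first by rewrite dec_tuple_code dec_val_code.
by exists (dec_tuple k z), (dec_val k z); rewrite code_dec.
Qed.

Definition coded k (f : pfun k) : pfun 1 := fun t => f (dec_tuple k (thead t)).

Lemma graph_code k (f : pfun k) (x : k.-tuple nat) y :
  graph f (code_seq (rcons x y)) <-> f x = Some y.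
Proof. by rewrite graphE dec_tuple_code dec_val_code. Qed.

Lemma uniform_bound (P : nat -> Prop) (Q : nat -> nat -> Prop) n :
  (forall i, i < n -> P i -> exists m, Q i m) ->
  exists B, forall i, i < n -> P i -> exists2 m, m < B & Q i m.
Proof.
elim: n => [|n IH] exQ; first by exists 0.
have [B HB] := IH (fun i lt_in => exQ i (ltnW lt_in)).
have [Pn | nPn] := classic (P n).
- have [m Qm] := exQ n (ltnSn n) Pn.
  exists (maxn B m.+1) => i; rewrite ltnS leq_eqVlt => /orP [/eqP -> _ | lt_in Pi].
    by exists m; rewrite // leq_max leqnn orbT.
  have [m' lt_m' Qm'] := HB i lt_in Pi.
  by exists m'; rewrite // leq_max lt_m'.
- by exists B => i; rewrite ltnS leq_eqVlt => /orP [/eqP -> // | lt_in]; apply: HB.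
Qed.

(** * Totality in a class closed under the recursive operations *)

Record rec_closed (C : class) : Prop := RecClosed {
  closed_zero k : C k (@zero_fn k);
  closed_succ : C 1 succ_fn;
  closed_proj k (i : 'I_k) : C k (proj_fn i);
  closed_subst m k (h : pfun m) (gs : 'I_m -> pfun k) :
    C m h -> (forall i, C k (gs i)) -> C k (subst_fn h gs);
  closed_prec k (g : pfun k) (h : pfun k.+2) : C k g -> C k.+2 h -> C k.+1 (prec_fn g h);
  closed_mu k (g : pfun k.+1) (f : pfun k) : C k.+1 g -> is_mu g f -> C k f }.

Lemma PR_rec_closed : rec_closed PR.
Proof.
by constructor; [exact: PR_zero | exact: PR_succ | exact: PR_proj | exact: PR_subst
                | exact: PR_prec | exact: PR_mu].
Qed.

Lemma hyp1_rec_closed K : hyp1 K -> rec_closed K.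
Proof. by case=> PR_K [? [? ?]]; constructor=> //; move=> *; apply: PR_K; constructor. Qed.

Fixpoint trec k (g : k.-tuple nat -> nat) (h : k.+2.-tuple nat -> nat) x n :=
  if n is n'.+1 then h (cons_tuple n' (cons_tuple (trec g h x n') x)) else g x.

Section RecClosed.
Variable C : class.
Hypothesis hC : rec_closed C.

Definition tot k (f : k.-tuple nat -> nat) := C (fun x => Some (f x)).
Definition tot1 (f : nat -> nat) := tot (fun t : 1.-tuple nat => f (nth 0 t 0)).
Definition tot2 (f : nat -> nat -> nat) :=
  tot (fun t : 2.-tuple nat => f (nth 0 t 0) (nth 0 t 1)).

Lemma class_ext k (f g : pfun k) : C f -> f =1 g -> C g.
Proof. by move=> Cf /functional_extensionality <-. Qed.

Lemma tot_ext k (f g : k.-tuple nat -> nat) : tot f -> f =1 g -> tot g.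
Proof. by move=> Tf eq_fg; apply: class_ext Tf _ => x; rewrite eq_fg. Qed.

Lemma class_comp m k (h : pfun m) (G : k.-tuple nat -> m.-tuple nat) :
  C h -> (forall i, i < m -> tot (fun x => nth 0 (G x) i)) -> C (fun x => h (G x)).
Proof.
move=> Ch TG; apply: class_ext (closed_subst hC Ch (fun i => TG i (ltn_ord i))) _ => x.
rewrite /subst_fn (introT forallP) //; congr h.
by apply: eq_from_tnth => i; rewrite tnth_mktuple (tnth_nth 0).
Qed.

Lemma tot_comp m k (h : m.-tuple nat -> nat) (G : k.-tuple nat -> m.-tuple nat) :
  tot h -> (forall i, i < m -> tot (fun x => nth 0 (G x) i)) -> tot (fun x => h (G x)).
Proof. exact: class_comp. Qed.

Lemma tot_nth k i : i < k -> tot (fun x : k.-tuple nat => nth 0 x i).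
Proof.
move=> lt_ik; apply: tot_ext (closed_proj hC (Ordinal lt_ik)) _ => x.
by rewrite /proj_fn (tnth_nth 0).
Qed.

Lemma theadE k (x : k.+1.-tuple nat) : thead x = nth 0 x 0.
Proof. exact: tnth_nth. Qed.

Lemma tot_thead {k} : tot (fun x : k.+1.-tuple nat => thead x).
Proof. by apply: tot_ext (tot_nth (ltn0Sn k)) _ => x; rewrite theadE. Qed.

Lemma tot_behead k (g : k.-tuple nat -> nat) :
  tot g -> tot (fun x : k.+1.-tuple nat => g (behead_tuple x)).
Proof.
move=> Tg; apply: tot_comp Tg _ => i lt_ik.
by apply: tot_ext (tot_nth (_ : i.+1 < k.+1)) _ => // x; rewrite nth_behead.
Qed.

Lemma tot_app1 f k (a : k.-tuple nat -> nat) : tot1 f -> tot a -> tot (fun x => f (a x)).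
Proof. by move=> Tf Ta; apply: (tot_comp (G := fun x => [tuple a x]) Tf); case. Qed.

Lemma tot_app2 f k (a b : k.-tuple nat -> nat) :
  tot2 f -> tot a -> tot b -> tot (fun x => f (a x) (b x)).
Proof. by move=> Tf Ta Tb; apply: (tot_comp (G := fun x => [tuple a x; b x]) Tf) => -[|[]]. Qed.

Lemma totS k (a : k.-tuple nat -> nat) : tot a -> tot (fun x => (a x).+1).
Proof. by apply: tot_app1; apply: tot_ext (closed_succ hC) _ => x; rewrite theadE. Qed.

Lemma tot_const {k} c : tot (fun _ : k.-tuple nat => c).
Proof. by elim: c => [|c]; [exact: closed_zero | exact: totS]. Qed.

Lemma tot_rec k (g : k.-tuple nat -> nat) (h : k.+2.-tuple nat -> nat) :
  tot g -> tot h -> tot (fun t : k.+1.-tuple nat => trec g h (behead_tuple t) (thead t)).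
Proof.
move=> Tg Th; apply: class_ext (closed_prec hC Tg Th) _ => t.
by rewrite /prec_fn; elim: (thead t) => //= n ->.
Qed.

Lemma tot_addn : tot2 addn.
Proof.
apply: tot_ext (tot_rec (tot_nth (isT : 0 < 1)) (totS (tot_nth (isT : 1 < 3)))) _ => t.
by rewrite theadE; elim: (nth 0 t 0) => /= [|n ->]; rewrite ?nth_behead.
Qed.

Lemma totD k (a b : k.-tuple nat -> nat) : tot a -> tot b -> tot (fun x => a x + b x).
Proof. exact: tot_app2 tot_addn. Qed.

Lemma tot_muln : tot2 muln.
Proof.
have Tstep := totD (tot_nth (isT : 1 < 3)) (tot_nth (isT : 2 < 3)).
apply: tot_ext (tot_rec (tot_const 0) Tstep) _ => t.
by rewrite theadE; elim: (nth 0 t 0) => //= n ->; rewrite nth_behead mulSn addnC.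
Qed.

Lemma totM k (a b : k.-tuple nat -> nat) : tot a -> tot b -> tot (fun x => a x * b x).
Proof. exact: tot_app2 tot_muln. Qed.

Lemma tot_predn : tot1 predn.
Proof.
apply: tot_ext (tot_rec (tot_const 0) (tot_nth (isT : 0 < 2))) _ => t.
by rewrite theadE; case: (nth 0 t 0).
Qed.

Lemma totB k (a b : k.-tuple nat -> nat) : tot a -> tot b -> tot (fun x => a x - b x).
Proof.
have subr : tot2 (fun n m => m - n).
  have Tstep := tot_app1 tot_predn (tot_nth (isT : 1 < 3)).
  apply: tot_ext (tot_rec (tot_nth (isT : 0 < 1)) Tstep) _ => t.
  by rewrite theadE; elim: (nth 0 t 0) => /= [|n ->]; rewrite ?nth_behead ?subn0 ?subnS.
by move=> Ta Tb; apply: tot_app2 subr Tb Ta.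
Qed.

Lemma tot_eq0 k (a : k.-tuple nat -> nat) : tot a -> tot (fun x => a x == 0).
Proof.
apply: (tot_app1 (f := fun n => n == 0)).
apply: tot_ext (tot_rec (k := 0) (tot_const 1) (tot_const 0)) _ => t.
by rewrite theadE; case: (nth 0 t 0).
Qed.

Lemma tot_eqn k (a b : k.-tuple nat -> nat) : tot a -> tot b -> tot (fun x => a x == b x).
Proof.
move=> Ta Tb; apply: tot_ext (tot_eq0 (totD (totB Ta Tb) (totB Tb Ta))) _ => x.
by case: eqP; case: eqP => //; lia.
Qed.

Lemma tot_ltn k (a b : k.-tuple nat -> nat) : tot a -> tot b -> tot (fun x => a x < b x).
Proof. by move=> Ta Tb; apply: tot_ext (tot_eq0 (totB (totS Ta) Tb)) _ => x; rewrite subn_eq0. Qed.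

Lemma tot_andb k (a b : k.-tuple nat -> bool) : tot a -> tot b -> tot (fun x => a x && b x).
Proof. by move=> Ta Tb; apply: tot_ext (totM Ta Tb) _ => x; case: (a x); case: (b x). Qed.

Lemma tot_negb k (a : k.-tuple nat -> bool) : tot a -> tot (fun x => ~~ a x).
Proof. by move=> Ta; apply: tot_ext (tot_eq0 Ta) _ => x; case: (a x). Qed.

Lemma tot_implb k (a b : k.-tuple nat -> bool) : tot a -> tot b -> tot (fun x => a x ==> b x).
Proof.
move=> Ta Tb; apply: tot_ext (tot_negb (tot_andb Ta (tot_negb Tb))) _ => x.
by case: (a x); case: (b x).
Qed.

Lemma tot_exp2 : tot1 (expn 2).
Proof.
have Tstep := totD (tot_nth (isT : 1 < 2)) (tot_nth (isT : 1 < 2)).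
apply: tot_ext (tot_rec (tot_const 1) Tstep) _ => t.
by rewrite theadE; elim: (nth 0 t 0) => //= n ->; rewrite expnS mul2n addnn.
Qed.

Lemma tot_odd : tot1 odd.
Proof.
apply: tot_ext (tot_rec (tot_const 0) (totB (tot_const 1) (tot_nth (isT : 1 < 2)))) _ => t.
by rewrite theadE; elim: (nth 0 t 0) => //= n ->; case: (odd n).
Qed.

Lemma tot_tri : tot1 tri.
Proof.
have Tstep := totD (tot_nth (isT : 1 < 2)) (totS (tot_nth (isT : 0 < 2))).
apply: tot_ext (tot_rec (tot_const 0) Tstep) _ => t.
by rewrite theadE; elim: (nth 0 t 0) => //= n ->; rewrite triS.
Qed.

Lemma tot_cons k (p : k.+1.-tuple nat -> nat) (a : k.-tuple nat -> nat) :
  tot p -> tot a -> tot (fun x => p (cons_tuple (a x) x)).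
Proof. by move=> Tp Ta; apply: tot_comp Tp _ => -[|i] //= lt_ik; apply: tot_nth. Qed.

Lemma class_least k (p : k.+1.-tuple nat -> bool) :
  tot p -> C (fun x => least (fun w => p (cons_tuple w x))).
Proof.
move=> Tp; apply: (closed_mu hC (tot_negb Tp)) => x y; rewrite leastP.
split=> [[py below_y] | [eq0 below_y]]; split.
- by rewrite py.
- by move=> z /below_y; case: (p _) => // _; exists 0.
- by case: (p _) eq0.
- by move=> z /below_y [v]; case: (p _).
Qed.

Lemma tot_least k (p : k.+1.-tuple nat -> bool) :
  tot p -> (forall x, exists w, p (cons_tuple w x)) ->
  tot (fun x => odflt 0 (least (fun w => p (cons_tuple w x)))).
Proof.
move=> Tp ex_p; apply: class_ext (class_least Tp) _ => x.
have [w pw] := ex_p x.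
by have [w' [-> _]] := least_witness (P := fun w => p (cons_tuple w x)) pw.
Qed.

Lemma tot_all_iota k (p : nat -> k.-tuple nat -> bool) (b : k.-tuple nat -> nat) :
  tot (fun s : k.+1.-tuple nat => p (thead s) (behead_tuple s)) -> tot b ->
  tot (fun x => all (p^~ x) (iota 0 (b x))).
Proof.
move=> Tp Tb.
pose step (s : k.+2.-tuple nat) := nth 0 s 1 * p (thead s) (behead_tuple (behead_tuple s)).
have Tstep : tot step.
  apply: totM (tot_nth (isT : 1 < k.+2)) _.
  pose drop2nd (s : k.+2.-tuple nat) : k.+1.-tuple nat :=
    cons_tuple (thead s) (behead_tuple (behead_tuple s)).
  apply: tot_ext (tot_comp (G := drop2nd) Tp _) _ => [[_ | i lt_ik] | s] /=.
  - exact: tot_thead.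
  - by apply: tot_ext (tot_nth (_ : i.+2 < k.+2)) _ => // s; rewrite !nth_behead.
  - by rewrite behead_cons_tuple.
apply: tot_ext (tot_cons (tot_rec (tot_const 1) Tstep) Tb) _ => x.
rewrite behead_cons_tuple theadE /=; elim: (b x) => // n IH.
have -> : iota 0 n.+1 = rcons (iota 0 n) n by rewrite -cats1 -addn1 iotaD.
rewrite all_rcons /= IH /step /= !behead_cons_tuple andbC.
by case: (p n x); case: all.
Qed.

Lemma tot_has_iota k (p : nat -> k.-tuple nat -> bool) (b : k.-tuple nat -> nat) :
  tot (fun s : k.+1.-tuple nat => p (thead s) (behead_tuple s)) -> tot b ->
  tot (fun x => has (p^~ x) (iota 0 (b x))).
Proof.
move=> Tp Tb.
apply: tot_ext (tot_negb (tot_all_iota (p := fun i x => ~~ p i x) (tot_negb Tp) Tb)) _.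
by move=> x; rewrite -has_predC; congr nat_of_bool; apply: eq_has => i /=; rewrite negbK.
Qed.

Lemma tot_diag : tot1 diag.
Proof.
have Tp : tot (fun s : 2.-tuple nat => nth 0 s 1 < tri (thead s).+1).
  exact: tot_ltn (tot_nth (isT : 1 < 2)) (tot_app1 tot_tri (totS tot_thead)).
apply: tot_ext (tot_least Tp _) _ => x //.
by exists (nth 0 x 0); rewrite theadE /= triS; lia.
Qed.

Lemma tot_csnd k (a : k.-tuple nat -> nat) : tot a -> tot (fun x => csnd (a x)).
Proof. by move=> Ta; apply: totB Ta (tot_app1 tot_tri (tot_app1 tot_diag Ta)). Qed.

Lemma tot_cfst k (a : k.-tuple nat -> nat) : tot a -> tot (fun x => cfst (a x)).
Proof. by move=> Ta; apply: totB (tot_app1 tot_diag Ta) (tot_csnd Ta). Qed.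

Lemma tot_cpair k (a b : k.-tuple nat -> nat) : tot a -> tot b -> tot (fun x => cpair (a x) (b x)).
Proof. by move=> Ta Tb; apply: totD (tot_app1 tot_tri (totD Ta Tb)) Tb. Qed.

Lemma tot_divS k (a b : k.-tuple nat -> nat) : tot a -> tot b -> tot (fun x => a x %/ (b x).+1).
Proof.
move=> Ta Tb.
pose p (s : k.+1.-tuple nat) := a (behead_tuple s) < (thead s).+1 * (b (behead_tuple s)).+1.
have Tp : tot p by exact: tot_ltn (tot_behead Ta) (totM (totS tot_thead) (totS (tot_behead Tb))).
apply: tot_ext (tot_least Tp _) _ => x.
  by exists (a x); rewrite /p behead_cons_tuple theadE /=; nia.
rewrite (_ : least _ = Some (a x %/ (b x).+1)) //; apply/leastP; split.
  by rewrite /p behead_cons_tuple theadE ltn_ceil.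
move=> q lt_q; rewrite /p behead_cons_tuple theadE /= -leqNgt.
apply: leq_trans _ (leq_divM (a x) (b x).+1).
by rewrite leq_mul2r lt_q orbT.
Qed.

Lemma tot_Dfin k (a b : k.-tuple nat -> nat) : tot a -> tot b -> tot (fun x => Dfin (a x) (b x)).
Proof.
move=> Ta Tb.
apply: tot_ext (tot_app1 tot_odd (tot_divS Ta (tot_app1 tot_predn (tot_app1 tot_exp2 Tb)))) _ => x.
by rewrite prednK ?expn_gt0.
Qed.

Lemma tot_dec_args k i : tot1 (fun z => nth 0 (dec_args k z) i).
Proof.
elim: k i => [|k IH] [|i] /=; rewrite ?nth_nil; try exact: tot_const.
  exact: tot_cfst (tot_nth _).
exact: tot_app1 (IH i) (tot_csnd (tot_nth _)).
Qed.

Lemma tot_dec_val k : tot1 (dec_val k).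
Proof. by elim: k => [|k IH] /=; [exact: tot_nth | exact: tot_app1 IH (tot_csnd (tot_nth _))]. Qed.

Lemma tot_foldr_cpair l k (y : l.-tuple nat -> nat) (xs : l.-tuple nat -> k.-tuple nat) :
  tot y -> (forall i, i < k -> tot (fun t => nth 0 (xs t) i)) ->
  tot (fun t => foldr cpair (y t) (xs t)).
Proof.
elim: k xs => [|k IH] xs Ty Txs.
  by apply: tot_ext Ty _ => t; case: (xs t) => -[].
have Tbehead : tot (fun t => foldr cpair (y t) (behead_tuple (xs t))).
  by apply: IH => // i lt_ik; apply: tot_ext (Txs i.+1 lt_ik) _ => t; rewrite nth_behead.
apply: tot_ext (tot_cpair (Txs 0 (ltn0Sn k)) Tbehead) _ => t.
by case: (xs t) => -[|a s].
Qed.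

Lemma class_omap k (g : pfun k) (h : nat -> nat) : C g -> tot1 h -> C (fun x => omap h (g x)).
Proof.
move=> Cg Th; apply: class_ext (closed_subst hC Th (fun _ : 'I_1 => Cg)) _ => x.
rewrite /subst_fn; case: (g x) => [v|] /=.
  have -> : [forall i : 'I_1, true] by apply/forallP.
  by rewrite (nth_map ord0) ?size_enum_ord.
by case: forallP => // /(_ ord0).
Qed.

(* Substitution is strict, so the case distinction on [c m] is made by a
   primitive recursion of length [c m] whose step evaluates [a]. *)
Lemma tot_guard (a : pfun 1) (c : nat -> nat) :
  C a -> tot1 c -> (forall m, c m != 0 -> a [tuple m] <> None) ->
  tot1 (fun m => if c m == 0 then 0 else odflt 0 (a [tuple m])).
Proof.
move=> Ca Tc a_def.
have Cstep : C (fun t : 3.-tuple nat => a [tuple nth 0 t 2]).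
  by apply: class_comp Ca _ => -[|//] _; apply: tot_nth.
have := class_comp (G := fun t : 1.-tuple nat => [tuple c (nth 0 t 0); nth 0 t 0])
  (closed_prec hC (closed_zero hC 1) Cstep).
move/(_ _)/class_ext; apply=> [[|[|i]] // _ | t] /=; first exact: tot_nth.
rewrite /prec_fn /=.
have -> : behead_tuple [tuple c (nth 0 t 0); nth 0 t 0] = [tuple nth 0 t 0] by exact: val_inj.
move: (a_def (nth 0 t 0)); case: (c _) => [// | n] /(_ isT).
case E: (a _) => [v|] // _.
by elim: n => [|n] /=; rewrite ?E // => ->.
Qed.

Lemma tot_of_class1 (a : pfun 1) :
  C a -> (forall m, a [tuple m] <> None) -> tot1 (fun m => odflt 0 (a [tuple m])).
Proof.
move=> Ca a_def.
by apply: tot_ext (tot_guard (c := fun=> 1) Ca (tot_const 1) (fun m _ => a_def m)) _.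
Qed.

Lemma class_search_cfst k (f : pfun k) (p : k.+1.-tuple nat -> bool) :
  tot p -> (forall x w, p (cons_tuple w x) -> f x = Some (cfst w)) ->
  (forall x y, f x = Some y -> exists w, p (cons_tuple w x)) -> C f.
Proof.
move=> Tp sound complete.
apply: class_ext (class_omap (class_least Tp) (tot_cfst (tot_nth (isT : 0 < 1)))) _ => x.
case Efx: (f x) => [y|].
  have [w pw] := complete x y Efx.
  have [w' [-> pw']] := least_witness (P := fun w => p (cons_tuple w x)) pw.
  by rewrite /= -Efx (sound x w').
by case Eleast: least => [w|] //; move/leastP: Eleast => [/sound]; rewrite Efx.
Qed.

(** * Projections of decidable relations *)

Definition sigma1 (X : nat -> Prop) :=
  exists2 q : nat -> nat -> bool, tot2 (fun m z => q m z) & forall z, X z <-> exists m, q m z.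

Lemma class_of_sigma1_graph k (f : pfun k) : sigma1 (graph f) -> C f.
Proof.
case=> q Tq graph_q.
pose p (s : k.+1.-tuple nat) := q (csnd (thead s)) (code_seq (rcons (behead s) (cfst (thead s)))).
have Tp : tot p.
  apply: tot_app2 Tq (tot_csnd tot_thead) _.
  apply: tot_ext (tot_foldr_cpair (xs := @behead_tuple k.+1 nat) (tot_cfst tot_thead) _) _.
    by move=> i lt_ik; apply: tot_ext (tot_nth (_ : i.+1 < k.+1)) _ => // s; rewrite nth_behead.
  by move=> s; rewrite code_rcons.
apply: (class_search_cfst Tp) => [x w | x y fxy].
  by rewrite /p theadE /= => /(ex_intro _ (csnd w)) /graph_q /graph_code.
have [m qm] := (graph_q (code_seq (rcons x y))).1 ((graph_code f x y).2 fxy).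
by exists (cpair y m); rewrite /p theadE /= cfst_cpair csnd_cpair.
Qed.

Lemma sigma1_enum_reducible (X Y W : nat -> Prop) :
  sigma1 W -> sigma1 Y ->
  (forall z, X z <-> exists u, W (cpair z u) /\ forall i, Dfin u i -> Y i) -> sigma1 X.
Proof.
case=> qW TqW W_qW [qY TqY Y_qY] X_WY.
(* A witness for [X z] codes (u, m, B): [m] witnesses [W (cpair z u)] and
   [B] bounds witnesses for [Y i] at every [i] in [D_u]. *)
pose covered u B i := Dfin u i ==> has (qY^~ i) (iota 0 B).
exists (fun m z => qW (cfst (csnd m)) (cpair z (cfst m))
                   && all (covered (cfst m) (csnd (csnd m))) (iota 0 (cfst m))).
  have Tm := tot_nth (isT : 0 < 2); have Tz := tot_nth (isT : 1 < 2).
  apply: tot_andb.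
    exact: tot_app2 TqW (tot_cfst (tot_csnd Tm)) (tot_cpair Tz (tot_cfst Tm)).
  apply: tot_all_iota (tot_cfst Tm).
  apply: tot_implb; first exact: tot_Dfin (tot_cfst (tot_behead Tm)) tot_thead.
  apply: tot_has_iota (tot_csnd (tot_csnd (tot_behead Tm))).
  exact: tot_app2 TqY tot_thead (tot_behead tot_thead).
move=> z; rewrite X_WY; split.
  case=> u [/W_qW [mW qWm] DY].
  have [|B HB] := uniform_bound (P := fun i => Dfin u i) (Q := fun i j => qY j i) (n := u).
    by move=> i _ /DY /Y_qY.
  exists (cpair u (cpair mW B)); rewrite !(cfst_cpair, csnd_cpair) qWm /=.
  apply/allP => i; rewrite mem_iota => /andP [_ lt_iu].
  apply/implyP => /(HB i lt_iu) [j lt_jB qYj].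
  by apply/hasP; exists j; rewrite // mem_iota.
case=> m /andP [qWm /allP covered_u]; exists (cfst m).
split; first by apply/W_qW; exists (cfst (csnd m)).
move=> i Di; apply/Y_qY.
have /implyP/(_ Di)/hasP [j _ qYj] : covered (cfst m) (csnd (csnd m)) i.
  by apply: covered_u; rewrite mem_iota Dfin_lt.
by exists j.
Qed.

Lemma class_coded k (f : pfun k) : C f -> C (coded f).
Proof.
move=> Cf; apply: class_comp Cf _ => i _.
by apply: tot_ext (tot_dec_args k i) _ => t; rewrite theadE.
Qed.

End RecClosed.

Section Enumerated.
Variable K : class.
Hypotheses (K_closed : hyp1 K) (K_enum : hyp2 K).
Let K_rc := hyp1_rec_closed K_closed.

Lemma hyp2_tot_enum (g : pfun 1) : K g ->
  exists c a o : nat -> nat, [/\ tot1 K c, tot1 K a, tot1 K o &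
    forall x y, g [tuple x] = Some y <-> exists m, [/\ c m = 1, a m = x & o m = y]].
Proof.
move=> /K_enum [M [alpha [omega [chi [Kalpha [Komega [dom_M [Kchi [chiM graph_g]]]]]]]]].
have chi_val m : (M m /\ chi [tuple m] = Some 1) \/ (~ M m /\ chi [tuple m] = Some 0).
  have [Mm | nMm] := classic (M m); [left | right]; split=> //.
    exact: (chiM m).1.
  exact: (chiM m).2.
pose c m := odflt 0 (chi [tuple m]).
have Mc m : c m != 0 -> M m by rewrite /c; case: (chi_val m) => -[// _ ->].
have Tc : tot1 K c.
  by apply: (tot_of_class1 K_rc Kchi) => m; case: (chi_val m) => -[_ ->].
exists c, (fun m => if c m == 0 then 0 else odflt 0 (alpha [tuple m])),
  (fun m => if c m == 0 then 0 else odflt 0 (omega [tuple m])); split => //.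
- exact: (tot_guard K_rc Kalpha Tc (fun m cm => (dom_M m (Mc m cm)).1)).
- exact: (tot_guard K_rc Komega Tc (fun m cm => (dom_M m (Mc m cm)).2)).
move=> x y; rewrite graph_g; split=> [[m [Mm [am om]]] | [m [cm1 <- <-]]]; exists m.
  by rewrite /c; case: (chi_val m) => -[// _ ->]; rewrite am om.
have /Mc Mm : c m != 0 by rewrite cm1.
have [] := dom_M m Mm; rewrite cm1 /=.
by case: (alpha _) => // a _; case: (omega _).
Qed.

Lemma sigma1_re_set (W : nat -> Prop) : re_set W -> sigma1 K W.
Proof.
case=> g [/(proj1 K_closed) Kg W_g].
have [c [a [o [Tc Ta _ graph_g]]]] := hyp2_tot_enum Kg.
exists (fun m z => (c m == 1) && (a m == z)).
  have Tm := tot_nth K_rc (isT : 0 < 2); have Tz := tot_nth K_rc (isT : 1 < 2).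
  exact: (tot_andb K_rc (tot_eqn K_rc (tot_app1 K_rc Tc Tm) (tot_const K_rc 1))
                        (tot_eqn K_rc (tot_app1 K_rc Ta Tm) Tz)).
move=> z; rewrite W_g; split.
  case E: (g _) => [y|] // _; have [m [cm am _]] := (graph_g z y).1 E.
  by exists m; rewrite cm am !eqxx.
case=> m /andP [/eqP cm /eqP am].
by rewrite (_ : g _ = Some (o m)) //; apply/graph_g; exists m.
Qed.

Lemma sigma1_graph k (F : pfun k) : K F -> sigma1 K (graph F).
Proof.
move=> /(class_coded K_rc) /hyp2_tot_enum [c [a [o [Tc Ta To graph_F]]]].
exists (fun m z => [&& c m == 1, a m == z & o m == dec_val k z]).
  have Tm := tot_nth K_rc (isT : 0 < 2); have Tz := tot_nth K_rc (isT : 1 < 2).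
  exact: (tot_andb K_rc (tot_eqn K_rc (tot_app1 K_rc Tc Tm) (tot_const K_rc 1))
           (tot_andb K_rc (tot_eqn K_rc (tot_app1 K_rc Ta Tm) Tz)
              (tot_eqn K_rc (tot_app1 K_rc To Tm) (tot_app1 K_rc (tot_dec_val K_rc k) Tz)))).
move=> z; rewrite graphE (_ : F _ = coded F [tuple z]) // graph_F.
split=> [[m [cm am om]] | [m /and3P [/eqP cm /eqP am /eqP om]]]; exists m => //.
by rewrite cm am om !eqxx.
Qed.

End Enumerated.

Lemma re_set_of_tot1 (p : nat -> bool) : tot1 PR p -> re_set p.
Proof.
move=> Tp; exists (fun x => least (fun w => p (nth 0 (cons_tuple w x) 1))); split.
  have PRc := PR_rec_closed.
  exact: (class_least PRc (tot_app1 PRc Tp (tot_nth PRc (isT : 1 < 2)))).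
move=> z /=; split=> [pz /least_None | npz]; first by apply; exists 0.
by apply/negP => pz; apply/npz/least_None; case.
Qed.

Lemma enum_reducible_of_many_one (X Y : nat -> Prop) (h : nat -> nat) :
  tot1 PR h -> (forall z, X z <-> Y (h z)) -> enum_reducible X Y.
Proof.
move=> Th X_Y; exists (fun v => csnd v == 2 ^ h (cfst v)); split.
  apply: re_set_of_tot1; have PRc := PR_rec_closed; have Tz := tot_nth PRc (isT : 0 < 1).
  exact: (tot_eqn PRc (tot_csnd PRc Tz)
            (tot_app1 PRc (tot_exp2 PRc) (tot_app1 PRc Th (tot_cfst PRc Tz)))).
move=> z; rewrite X_Y; split=> [Yhz | [u []]]; rewrite /= ?cfst_cpair ?csnd_cpair.
  exists (2 ^ h z); rewrite /= cfst_cpair csnd_cpair.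
  by split=> // i; rewrite Dfin_exp2 => /eqP ->.
by move=> /eqP -> Du; apply: Du; rewrite Dfin_exp2.
Qed.

Lemma rel_rec_of_class (K : class) (F : pfun 2) k (f : pfun k) :
  rec_closed K -> universal K F -> K k f -> rel_rec f F.
Proof.
move=> K_rc univ /(class_coded K_rc) /univ [n Fn].
apply: (enum_reducible_of_many_one (h := fun z => code_seq (rcons [tuple n; z] (dec_val k z)))).
  have PRc := PR_rec_closed; have Tz := tot_nth PRc (isT : 0 < 1).
  exact: (tot_cpair PRc (tot_const PRc n)
            (tot_cpair PRc Tz (tot_app1 PRc (tot_dec_val PRc k) Tz))).
by move=> z; rewrite graph_code Fn graphE.
Qed.

Lemma class_of_rel_rec (K : class) (F : pfun 2) k (f : pfun k) :
  hyp1 K -> hyp2 K -> K 2 F -> rel_rec f F -> K k f.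
Proof.
move=> K_closed K_enum KF [W [reW red]].
have K_rc := hyp1_rec_closed K_closed.
apply: (class_of_sigma1_graph K_rc).
exact: (sigma1_enum_reducible K_rc (sigma1_re_set K_closed K_enum reW)
          (sigma1_graph K_closed K_enum KF) red).
Qed.

Theorem lemma1 (K : class) :
  hyp1 K -> hyp2 K -> hyp3 K ->
  forall F : pfun 2, K 2 F -> universal K F ->
  forall (k : nat) (f : pfun k), K k f <-> rel_rec f F.
Proof.
(* Condition (3) only asserts that some universal function exists; here F is given. *)
move=> K_closed K_enum _ F KF univ k f; split.
  exact: rel_rec_of_class (hyp1_rec_closed K_closed) univ.
exact: class_of_rel_rec.
Qed.
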